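(* If $m,n\in\mathbb{Z}$ with $\gcd(m,n)=1$ (and $mn(m+n)\ne0$), then $A(m,n)=7^a(14b+1)$ for some integers $a,b\ge 0$, and every prime factor of $14b+1$ is congruent to $1 \pmod 7$. Moreover, for every prime $p\equiv 1\pmod 7$ there are infinitely many values $c=-\frac{A(m,n)}{B(m,n)}$ (with $\gcd(m,n)=1$, $mn(m+n)\neq0$) such that $p\mid A(m,n)$; for each of these $f_c(x)=x^2+c$ has a rational $3$-cycle.
   Context: $A(m,n)=m^6+2m^5n+4m^4n^2+8m^3n^3+9m^2n^4+4mn^5+n^6$, $B(m,n)=4m^2n^2(m+n)^2$. Standing fact: $f_c(x)=x^2+c$ ($c\in\mathbb{Q}$) has a rational $3$-cycle (orbit of a rational point of minimal period 3) if and only if $c=-A(m,n)/B(m,n)$ for some coprime integers $m,n$ with $mn(m+n)\neq 0$, and this fraction is then in lowest terms. *)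

From mathcomp Require Import all_boot all_order all_algebra.
Set Implicit Arguments. Unset Strict Implicit. Unset Printing Implicit Defensive.
Import Order.TTheory GRing.Theory Num.Theory.
Local Open Scope ring_scope.

Definition A (m n : int) : int :=
  m ^+ 6 + 2 * m ^+ 5 * n + 4 * m ^+ 4 * n ^+ 2 + 8 * m ^+ 3 * n ^+ 3
  + 9 * m ^+ 2 * n ^+ 4 + 4 * m * n ^+ 5 + n ^+ 6.

Definition B (m n : int) : int := 4 * m ^+ 2 * n ^+ 2 * (m + n) ^+ 2.

Definition fc (c : rat) (x : rat) : rat := x ^+ 2 + c.

Definition has_rat_3cycle (c : rat) : Prop :=
  exists x : rat, iter 3 (fc c) x = x /\ iter 1 (fc c) x <> x /\ iter 2 (fc c) x <> x.

From mathcomp Require Import all_boot all_order all_algebra.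
From mathcomp Require Import all_fingroup all_solvable all_field.
From mathcomp Require Import ring lra zify.
Set Implicit Arguments. Unset Strict Implicit.
Import Order.TTheory GRing.Theory Num.Theory.
Local Open Scope ring_scope.

(* A(m,n) = n^6 A(m/n,1) and, for coprime m n, a
   prime q dividing A(m,n) cannot divide n; so t = m/n is a root of A(t,1) in
   F_q.  A(t,1) has no root in F_2.  For odd q the polynomial identity
   A(t,1) Q(t) = 64 Phi_7(u(t)/2) (Phi_7 the 7th cyclotomic polynomial, u, Q
   explicit) shows that z = u(t)/2 is a 7th root of unity in F_q: either z = 1,
   which forces q = 7, or z has order 7 and q = 1 (mod 7).  Since A >= 0 (a sum
   of squares), A = 7^a r with every prime factor of r congruent to 1 mod 7,
   hence r = 1 (mod 7), and r is odd, so r = 14 b + 1.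
   Part 2 (infinitely many c).  For t = m/1 the value c(t) = -A(t,1)/B(t,1)
   admits the explicit 3-cycle of the paper.  If p = 1 (mod 7), F_p contains a
   primitive 7th root of unity z, and A(z + z^2, 1) is divisible by Phi_7(z),
   so p | A(m,1) whenever m = z + z^2 (mod p).  Taking m in this residue class
   and large enough makes c(m) smaller than every element of a given finite
   list, which yields infinitely many such c. *)

Definition Ag (R : comNzRingType) (m n : R) : R :=
  m ^+ 6 + 2 * m ^+ 5 * n + 4 * m ^+ 4 * n ^+ 2 + 8 * m ^+ 3 * n ^+ 3
  + 9 * m ^+ 2 * n ^+ 4 + 4 * m * n ^+ 5 + n ^+ 6.

Lemma A_Ag (m n : int) : A m n = Ag m n.
Proof. by []. Qed.

Lemma Ag_intr (R : comNzRingType) (m n : int) :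
  (Ag m n)%:~R = Ag (m%:~R : R) n%:~R.
Proof. by rewrite /Ag !(rmorphD, rmorphM, rmorphXn). Qed.

Lemma Ag_homog (F : fieldType) (m n : F) : n != 0 -> Ag m n = n ^+ 6 * Ag (m / n) 1.
Proof. by move=> n0; rewrite /Ag; field. Qed.

Lemma Ag_x0 (R : comNzRingType) (m : R) : Ag m 0 = m ^+ 6.
Proof. by rewrite /Ag; ring. Qed.

Definition Phi7 (R : comNzRingType) (z : R) : R :=
  1 + z + z ^+ 2 + z ^+ 3 + z ^+ 4 + z ^+ 5 + z ^+ 6.

Lemma Phi7_factor (R : comNzRingType) (z : R) : z ^+ 7 - 1 = (z - 1) * Phi7 z.
Proof. by rewrite /Phi7; ring. Qed.

Lemma Phi7_root (R : idomainType) (z : R) : z ^+ 7 = 1 -> z != 1 -> Phi7 z = 0.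
Proof.
move=> z7 z1; apply/eqP.
have : (z - 1) * Phi7 z == 0 by rewrite -Phi7_factor z7 subrr.
by rewrite mulf_eq0 subr_eq0 (negbTE z1).
Qed.

Definition Uf (R : comNzRingType) (t : R) : R :=
  - (3 + 4 * t + 3 * t ^+ 2 + t ^+ 3 + t ^+ 4).
Definition Qf (R : comNzRingType) (t : R) : R :=
  463 + 1860 * t + 4537 * t ^+ 2 + 7976 * t ^+ 3 + 11158 * t ^+ 4 + 13108 * t ^+ 5
  + 13268 * t ^+ 6 + 11772 * t ^+ 7 + 9259 * t ^+ 8 + 6496 * t ^+ 9 + 4089 * t ^+ 10
  + 2296 * t ^+ 11 + 1159 * t ^+ 12 + 516 * t ^+ 13 + 205 * t ^+ 14 + 68 * t ^+ 15
  + 21 * t ^+ 16 + 4 * t ^+ 17 + t ^+ 18.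

Lemma Ag_Phi7_Uf (F : fieldType) (t : F) : (2 : F) != 0 ->
  Ag t 1 * Qf t = 64 * Phi7 (Uf t / 2).
Proof. by move=> h2; rewrite /Ag /Qf /Phi7 /Uf; field. Qed.

Lemma Ag_Phi7_lift (R : comNzRingType) (z : R) :
  Ag (z + z ^+ 2) 1 = Phi7 z *
    (1 + 3 * z + 9 * z ^+ 2 + 13 * z ^+ 3 + 11 * z ^+ 4 + 5 * z ^+ 5 + z ^+ 6).
Proof. by rewrite /Ag /Phi7; ring. Qed.

Lemma Ag_root_root7 (F : fieldType) (t : F) : (2 : F) != 0 -> Ag t 1 = 0 ->
  (Uf t / 2) ^+ 7 = 1 /\ (Uf t / 2 = 1 -> (7 : F) = 0).
Proof.
move=> h2 hA; set z := Uf t / 2.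
have hP : Phi7 z = 0.
  have /eqP : 64 * Phi7 z = 0 by rewrite -Ag_Phi7_Uf // hA mul0r.
  have -> : (64 : F) = 2 ^+ 6 by rewrite -natrX.
  by rewrite mulf_eq0 expf_eq0 (negbTE h2) andbF => /eqP.
split; first by apply/eqP; rewrite -subr_eq0 Phi7_factor hP mulr0.
by move=> z1; move: hP; rewrite /Phi7 z1 !expr1n => <-; ring.
Qed.

(* F_2 contains no root of A(.,1): there t^2 = t and 28 = 0, and
   A(t,1) = 1 + 28 t + (t^2 - t)(...). *)
Lemma F2_Ag_nonroot (t : 'F_2) : Ag t 1 != 0.
Proof.
have ht : t ^+ 2 = t by have := expf_card t; rewrite card_Fp.
have h28 : (28 : 'F_2) = 0.
  have -> : (28 : 'F_2) = 2%:R * 14%:R by rewrite -natrM.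
  by rewrite pchar_Fp_0 ?mul0r.
have -> : Ag t 1 = 1 + 28 * t
    + (t ^+ 2 - t) * (24 + 15 * t + 7 * t ^+ 2 + 3 * t ^+ 3 + t ^+ 4).
  by rewrite /Ag; ring.
by rewrite ht subrr mul0r addr0 h28 mul0r addr0 oner_eq0.
Qed.

(* An l-th root of unity z != 1 in F_q (l prime) has order l, and l divides
   the order q - 1 of the unit group, so q = 1 (mod l). *)
Lemma Fp_root_unity_mod (q l : nat) (z : 'F_q) : prime q -> prime l ->
  z ^+ l = 1 -> z != 1 -> (q %% l = 1)%N.
Proof.
move=> pq pl zl z1.
have l1 := prime_gt1 pl; have q0 := prime_gt0 pq.
have [k pk kl] := prim_order_exists (prime_gt0 pl) zl.
have k1 : k != 1%N.
  by apply/eqP => k1; subst k; move: z1; rewrite -(prim_expr_order pk) expr1 eqxx.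
have /eqP kq1 : z ^+ q.-1 = 1.
  have z0 : z != 0.
    by apply/eqP => z0; move: zl; rewrite z0 expr0n gtn_eqF ?prime_gt0 // => /eqP; rewrite eq_sym oner_eq0.
  apply: (mulIf z0); rewrite mul1r -exprSr prednK //.
  by have := expf_card z; rewrite card_Fp.
move/(prime_nt_dvdP pl k1): kl => kl; subst k.
move: kq1; rewrite -(prim_order_dvd pk) => /dvdnP [c hc].
have -> : q = (c * l + 1)%N by rewrite -hc addn1 prednK.
by rewrite modnMDl modn_small.
Qed.

(* Conversely, if q = 1 (mod l) then l divides the order of the cyclic unit
   group of F_q, and Cauchy's theorem gives an l-th root of unity z != 1. *)
Lemma Fp_exists_root_unity (q l : nat) : prime q -> prime l -> (q %% l = 1)%N ->
  exists2 z : 'F_q, z ^+ l = 1 & z != 1.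
Proof.
move=> pq pl ql.
have l_units : (l %| #|[set: {unit 'F_q}]%G|)%N.
  rewrite card_finField_unit card_Fp //.
  by rewrite (divn_eq q l) ql addn1 /= dvdn_mull.
have [u _ ou] := Cauchy pl l_units.
exists (FinRing.uval u); first by rewrite -FinRing.val_unitX -ou expg_order.
apply/eqP => uval1.
have u1 : u = 1%g by apply: val_inj.
by move: ou pl; rewrite u1 order1 => <-.
Qed.

Lemma Fp_root_of_dvd_A (q : nat) (m n : int) : prime q -> coprimez m n ->
  (q %| Ag m n)%Z -> exists t : 'F_q, Ag t 1 = 0.
Proof.
move=> pq cmn.
have chq := pchar_Fp pq.
rewrite (dvdz_pcharf chq) Ag_intr.
set M : 'F_q := m%:~R; set N : 'F_q := n%:~R => /eqP hA.
have N0 : N != 0.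
  apply/eqP => N0; move/eqP: hA; rewrite N0 Ag_x0 expf_eq0 /= => /eqP M0.
  have : (q %| gcdz m n)%Z.
    by rewrite dvdz_gcd !(dvdz_pcharf chq) -/M -/N M0 N0.
  by move/eqP: cmn => ->; rewrite dvdzE /= dvdn1 => /eqP q1; move: pq; rewrite q1.
exists (M / N); apply/eqP.
by move: hA; rewrite Ag_homog // => /eqP; rewrite mulf_eq0 expf_eq0 (negbTE N0) andbF.
Qed.

Lemma prime_dvd_A (q : nat) (m n : int) : prime q -> coprimez m n ->
  (q %| A m n)%Z -> q != 2%N /\ (q = 7%N \/ (q %% 7 = 1)%N).
Proof.
move=> pq cmn qA.
have [t hA] := Fp_root_of_dvd_A pq cmn qA.
have chq := pchar_Fp pq.
have q_ne1 : q != 1%N by rewrite neq_ltn prime_gt1 ?orbT.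
have q_ne2 : q != 2%N by apply/eqP => q2; subst q; move: (F2_Ag_nonroot t); rewrite hA eqxx.
split=> //.
have two_ne0 : (2 : 'F_q) != 0.
  rewrite -(dvdn_pcharf chq 2).
  by apply: contra q_ne2 => /(prime_nt_dvdP (isT : prime 2) q_ne1) ->.
have [z7 z1_char7] := Ag_root_root7 two_ne0 hA.
have [z1|z_ne1] := eqVneq (Uf t / 2) 1.
  left; move/eqP: (z1_char7 z1); rewrite -(dvdn_pcharf chq 7).
  by move/(prime_nt_dvdP (isT : prime 7) q_ne1).
by right; apply: Fp_root_unity_mod pq _ z7 z_ne1.
Qed.

(* Numbers congruent to 1 mod d are closed under products: if every prime
   factor of r > 0 is 1 mod d, then so is r. *)
Lemma modn_prime_factors (d r : nat) : (1 < d)%N -> (0 < r)%N ->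
  (forall q : nat, prime q -> (q %| r)%N -> (q %% d = 1)%N) -> (r %% d = 1)%N.
Proof.
move=> d1; elim/ltn_ind: r => r IH r0 hr.
have [r_le1|r_gt1] := leqP r 1; first by rewrite (_ : r = 1%N) ?modn_small //; lia.
have pq := pdiv_prime r_gt1; have dq := pdiv_dvd r.
set q := pdiv r in pq dq *.
have rq : r = (q * (r %/ q))%N by rewrite mulnC divnK.
have s0 : (0 < r %/ q)%N by rewrite divn_gt0 ?(prime_gt0 pq) // dvdn_leq.
have slt : (r %/ q < r)%N by rewrite ltn_Pdiv ?prime_gt1.
have hs := IH _ slt s0 (fun p pp pd => hr p pp (dvdn_trans pd (dvdn_div dq))).
by rewrite rq -modnMm hs (hr q pq dq) modn_small.
Qed.

(* A is a positive semidefinite form: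
   1680 A = 105 X^2 + 42 Y^2 + 5 Z^2 + 688 n^6. *)
Lemma A_ge0 (m n : int) : 0 <= A m n.
Proof.
have sos : 1680 * A m n = 105 * (4 * m ^+ 3 + 4 * m ^+ 2 * n + m * n ^+ 2) ^+ 2
    + 42 * (10 * m ^+ 2 * n + 15 * m * n ^+ 2 + 4 * n ^+ 3) ^+ 2
    + 5 * (21 * m * n ^+ 2 + 8 * n ^+ 3) ^+ 2 + 688 * (n ^+ 3) ^+ 2.
  by rewrite /A; ring.
rewrite -(pmulr_rge0 _ (isT : (0 : int) < 1680)) sos.
by rewrite !addr_ge0 // mulr_ge0 // sqr_ge0.
Qed.

Lemma A_factorization (m n : int) : coprimez m n ->
  exists a b : nat, A m n = ((7 ^ a * (14 * b + 1))%N)%:Z /\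
    (forall q : nat, prime q -> (q %| 14 * b + 1)%N -> (q %% 7 = 1)%N).
Proof.
move=> cmn; set N := `|A m n|%N.
have AN : A m n = N%:Z by rewrite /N gez0_abs // A_ge0.
have hdiv q : prime q -> (q %| N)%N -> q != 2%N /\ (q = 7%N \/ (q %% 7 = 1)%N).
  by move=> pq qN; apply: prime_dvd_A pq cmn _; rewrite AN dvdzE.
have N_odd : ~~ (2 %| N)%N by apply/negP => /(hdiv 2 isT) [].
have N0 : (0 < N)%N by rewrite lt0n; apply: contraNneq N_odd => ->.
set a := logn 7 N; set r := (N %/ 7 ^ a)%N.
have Nr : N = (7 ^ a * r)%N by rewrite /r mulnC divnK // pfactor_dvdnn.
have r0 : (0 < r)%N by move: N0; rewrite Nr muln_gt0 => /andP[].
have r_not7 : ~~ (7 %| r)%N.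
  apply/negP => h7; have : (7 ^ a.+1 %| N)%N.
    by rewrite Nr expnSr dvdn_pmul2l // expn_gt0.
  by rewrite pfactor_dvdn // ltnn.
have hr q : prime q -> (q %| r)%N -> (q %% 7 = 1)%N.
  move=> pq qr; have qN : (q %| N)%N by rewrite Nr dvdn_mull.
  have [_ [q7|//]] := hdiv q pq qN.
  by move: r_not7; rewrite -q7 qr.
have r_mod7 := modn_prime_factors (isT : (1 < 7)%N) r0 hr.
have r_odd : ~~ (2 %| r)%N by apply: contra N_odd => h; rewrite Nr dvdn_mull.
have rb : r = (14 * (r %/ 14) + 1)%N by lia.
by exists a, (r %/ 14)%N; rewrite -rb AN Nr.
Qed.

Definition cpar (t : rat) : rat := - (Ag t 1 / (4 * t ^+ 2 * (t + 1) ^+ 2)).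

Lemma cpar_int (m : int) : cpar m%:~R = - ((A m 1)%:~R / (B m 1)%:~R).
Proof.
rewrite /cpar A_Ag Ag_intr /B !(rmorphM, rmorphXn, rmorphD, rmorph1).
by rewrite !expr1n !mulr1.
Qed.

(* For t (t + 1) != 0, f_{c(t)} has the explicit 3-cycle
   x1 -> x2 -> x3 -> x1 with x_i of denominator 2 t (t + 1); x2 - x1 and
   x3 - x1 are nonzero multiples of t^2 + t + 1 > 0. *)
Lemma cpar_3cycle (t : rat) : t != 0 -> t + 1 != 0 -> has_rat_3cycle (cpar t).
Proof.
move=> t0 t1.
set x1 := (t ^+ 3 + 2 * t ^+ 2 + t + 1) / (2 * t * (t + 1)).
set x2 := (t ^+ 3 - t - 1) / (2 * t * (t + 1)).
set x3 := - (t ^+ 3 + 2 * t ^+ 2 + 3 * t + 1) / (2 * t * (t + 1)).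
have f1 : fc (cpar t) x1 = x2 by rewrite /fc /cpar /x1 /x2 /Ag; field; rewrite t0 t1.
have f2 : fc (cpar t) x2 = x3 by rewrite /fc /cpar /x3 /x2 /Ag; field; rewrite t0 t1.
have f3 : fc (cpar t) x3 = x1 by rewrite /fc /cpar /x3 /x1 /Ag; field; rewrite t0 t1.
have tt1_gt0 : 0 < t ^+ 2 + t + 1 by nra.
have d21 : x2 - x1 = - ((t ^+ 2 + t + 1) / (t * (t + 1))).
  by rewrite /x1 /x2; field; rewrite t0 t1.
have d31 : x3 - x1 = - (t ^+ 2 + t + 1) / t.
  by rewrite /x1 /x3; field; rewrite t0 t1.
exists x1; split; [|split] => /=; rewrite ?f1 ?f2 ?f3 //; apply/eqP; rewrite -subr_eq0.
- by rewrite d21 oppr_eq0 mulf_neq0 ?invr_eq0 ?mulf_neq0 // gt_eqF.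
- by rewrite d31 mulf_neq0 ?invr_eq0 // oppr_eq0 gt_eqF.
Qed.

(* c(T) tends to -infinity: for T >= 16 (K + 1), c(T) < -K, since
   B(T,1) <= 16 T^4 and K * 16 T^4 <= T^6 < A(T,1). *)
Lemma cpar_lt (K T : rat) : 0 <= K -> 16 * (K + 1) <= T -> cpar T < - K.
Proof.
move=> K0 hT.
have T1 : 1 <= T by lra.
have T0 : 0 < T by lra.
have B_gt0 : 0 < 4 * T ^+ 2 * (T + 1) ^+ 2.
  by rewrite !mulr_gt0 ?exprn_gt0 ?addr_gt0.
have B_le : 4 * T ^+ 2 * (T + 1) ^+ 2 <= 16 * T ^+ 4.
  have h : (T + 1) ^+ 2 <= 4 * T ^+ 2 by nra.
  have := ler_wpM2l (mulr_ge0 (ler0n _ 4) (sqr_ge0 T)) h.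
  by rewrite (_ : 4 * T ^+ 2 * (4 * T ^+ 2) = 16 * T ^+ 4) //; ring.
have KB : K * (4 * T ^+ 2 * (T + 1) ^+ 2) <= T ^+ 6.
  have KT : K * 16 <= T ^+ 2 by nra.
  apply: (le_trans (ler_wpM2l K0 B_le)).
  have -> : T ^+ 6 = T ^+ 2 * T ^+ 4 by rewrite -exprD.
  by rewrite mulrA; apply: ler_wpM2r KT; rewrite exprn_ge0 // ltW.
have A_gt : T ^+ 6 < Ag T 1.
  have p2 : 0 < T ^+ 2 by rewrite exprn_gt0.
  have p3 : 0 < T ^+ 3 by rewrite exprn_gt0.
  have p4 : 0 < T ^+ 4 by rewrite exprn_gt0.
  have p5 : 0 < T ^+ 5 by rewrite exprn_gt0.
  by rewrite /Ag !expr1n !mulr1; lra.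
rewrite /cpar ltrN2 ltr_pdivlMr //; lra.
Qed.

Lemma seq_lower_bound (s : seq rat) : exists K : nat, forall c, c \in s -> - K%:R <= c.
Proof.
elim: s => [|x s [K hK]]; first by exists 0%N.
exists (K + Num.Def.archi_bound `|x|)%N => c; rewrite inE natrD.
have hx := archi_boundP (normr_ge0 x).
have nx : - x <= `|x| by rewrite -normrN ler_norm.
have K0 : (0 : rat) <= K%:R by rewrite ler0n.
have b0 : (0 : rat) <= (Num.Def.archi_bound `|x|)%:R by rewrite ler0n.
by case/orP=> [/eqP -> | /hK ]; lra.
Qed.

Lemma dvd_A_residue (p : nat) (z : 'F_p) (j : nat) : prime p -> Phi7 z = 0 ->
  (p%:Z %| A (z + z ^ 2 + p * j)%N 1)%Z.
Proof.
move=> pp hz; rewrite (dvdz_pcharf (pchar_Fp pp)) A_Ag Ag_intr rmorph1.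
have -> : ((z + z ^ 2 + p * j)%N%:~R : 'F_p) = z + z ^+ 2.
  change ((z + z ^ 2 + p * j)%N%:R = z + z ^+ 2 :> 'F_p).
  by rewrite !natrD natrM pchar_Fp_0 // mul0r addr0 natrX natr_Zp.
by rewrite Ag_Phi7_lift hz mul0r.
Qed.

Lemma infinitely_many_c (p : nat) : prime p -> (p %% 7 = 1)%N ->
  forall s : seq rat, exists c : rat, c \notin s /\
    (exists m n : int, [/\ coprimez m n, m * n * (m + n) != 0,
         (p%:Z %| A m n)%Z & c = - ((A m n)%:~R / (B m n)%:~R)]) /\
    has_rat_3cycle c.
Proof.
move=> pp p7 s.
have [z z7 z1] := Fp_exists_root_unity pp (isT : prime 7) p7.
have hz := Phi7_root z7 z1.
have [K hK] := seq_lower_bound s.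
set mn : nat := (z + z ^ 2 + p * (16 * (K + 1)))%N.
set T : rat := mn%:R.
have hT : 16 * (K%:R + 1) <= T.
  have : ((16 * (K + 1))%:R : rat) <= T by rewrite ler_nat /mn; have := prime_gt0 pp; nia.
  by rewrite natrM natrD.
have K0 : (0 : rat) <= K%:R by rewrite ler0n.
have T_gt0 : 0 < T by lra.
have cT : cpar T = - ((A mn 1)%:~R / (B mn 1)%:~R) := cpar_int mn.
exists (cpar T); split; [|split].
- by apply/negP => /hK; have := cpar_lt K0 hT; lra.
- exists mn, 1; split; rewrite -?cT //; first by rewrite /coprimez gcdz1.
  + rewrite mulr1 mulf_neq0 ?gt_eqF ?ltr_wpDr //;
    by rewrite ltz_nat; have := prime_gt0 pp; lia.
  + exact: dvd_A_residue.
- by apply: cpar_3cycle; apply/lt0r_neq0; lra.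
Qed.

Theorem theorem3 :
  (forall m n : int, coprimez m n -> m * n * (m + n) != 0 ->
     exists a b : nat,
       A m n = ((7 ^ a * (14 * b + 1))%N)%:Z /\
       (forall q : nat, prime q -> (q %| 14 * b + 1)%N -> (q %% 7 = 1)%N)) /\
  (forall p : nat, prime p -> (p %% 7 = 1)%N ->
     forall s : seq rat, exists c : rat, c \notin s /\
       (exists m n : int, [/\ coprimez m n, m * n * (m + n) != 0,
            (p%:Z %| A m n)%Z & c = - ((A m n)%:~R / (B m n)%:~R)]) /\
       has_rat_3cycle c).
Proof.
split; last exact: infinitely_many_c.
by move=> m n cmn _; exact: A_factorization.
Qed.
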